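(* Let $p$ be a prime and $f:\mathbb{Z}_p\times\mathbb{Z}_p\to\mathbb{Z}_p$. (i) If $f$ is additively separable, then the functional box $P^f$ is local. (ii) If $f$ is additively inseparable, then $P^f\leftrightarrow PR_p$, i.e. $P^f\to PR_p$ and $PR_p\to P^f$.
   Context: Let $p$ be a prime. All arithmetic on elements of $\mathbb{Z}_p$ is modulo $p$. A box is a conditional probability distribution $P(a,b\mid x,y)$ with $a,b,x,y\in\mathbb{Z}_p$. It is shared by Alice, who supplies $x$ and receives $a$, and Bob, who supplies $y$ and receives $b$. Different copies of a box act independently. For $j\in\mathbb{Z}_p$, the box $PR_{p,j}$ is defined by $PR_{p,j}(a,b\mid x,y)=1/p$ if $a-b=xy-j$, and $0$ otherwise. We write $PR_p:=PR_{p,0}$. For $f:\mathbb{Z}_p\times\mathbb{Z}_p\to\mathbb{Z}_p$, the functional box is defined by $P^f(a,b\mid x,y)=1/p$ if $a-b=f(x,y)$, and $0$ otherwise. A function $f$ is additively separable if there exist $g,h:\mathbb{Z}_p\to\mathbb{Z}_p$ with $f(x,y)=g(x)+h(y)$ for all $x,y$. Otherwise $f$ is additively inseparable. A box is local if Alice and Bob can reproduce its distribution exactly using only shared randomness and local processing, without communication. $P_1\to P_2$ means the following. For some $N\ge1$, Alice and Bob, using shared randomness, $N$ copies of $P_1$, and local processing but no communication, can exactly produce outputs distributed as $P_2(a,b\mid x,y)$ for every input pair $(x,y)$. Here each party's inputs to the boxes may depend on their own input, the shared randomness, and their own previously obtained box outputs. $P_1\leftrightarrow P_2$ means $P_1\to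 P_2$ and $P_2\to P_1$. *)

From HB Require Import structures.
From mathcomp Require Import all_boot all_order all_algebra.
Set Implicit Arguments. Unset Strict Implicit. Unset Printing Implicit Defensive.
Import Order.TTheory GRing.Theory Num.Theory.
Local Open Scope ring_scope.

(* A box: P a b x y = P(a,b | x,y), all of a,b,x,y in Z_p ('Z_p, used with p prime). *)
Definition box (R : realFieldType) (p : nat) := 'Z_p -> 'Z_p -> 'Z_p -> 'Z_p -> R.

Definition PRj (R : realFieldType) (p : nat) (j : 'Z_p) : box R p :=
  fun a b x y => if a - b == x * y - j then (p%:R)^-1 else 0.

Definition PR (R : realFieldType) (p : nat) : box R p := @PRj R p 0.

Definition Pfun (R : realFieldType) (p : nat) (f : 'Z_p -> 'Z_p -> 'Z_p) : box R p :=
  fun a b x y => if a - b == f x y then (p%:R)^-1 else 0.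

Definition additively_separable (p : nat) (f : 'Z_p -> 'Z_p -> 'Z_p) : Prop :=
  exists (g h : 'Z_p -> 'Z_p), forall x y, f x y = g x + h y.

(* Shared randomness: a finite probability distribution w on a finite type L
   (local randomness can be absorbed into it). *)
Definition is_distr (R : realFieldType) (L : finType) (w : L -> R) : Prop :=
  (forall l, 0 <= w l) /\ \sum_(l : L) w l = 1.

Definition local (R : realFieldType) (p : nat) (P : box R p) : Prop :=
  exists (L : finType) (w : L -> R) (fa : 'Z_p -> L -> 'Z_p) (fb : 'Z_p -> L -> 'Z_p),
    is_distr w /\
    forall a b x y,
      P a b x y = \sum_(l : L) w l * ((fa x l == a) && (fb y l == b))%:R.

(* A strategy for choosing the input to the k-th copy is causal if it depends
   only on the outputs of copies 0..k-1 (plus own input and shared randomness). *)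
Definition causal (p N : nat) (L : finType)
    (s : 'I_N -> 'Z_p -> L -> {ffun 'I_N -> 'Z_p} -> 'Z_p) : Prop :=
  forall (k : 'I_N) (x : 'Z_p) (l : L) (o o' : {ffun 'I_N -> 'Z_p}),
    (forall j : 'I_N, (j < k)%N -> o j = o' j) -> s k x l o = s k x l o'.

(* P1 -> P2: with N >= 1 copies of P1 (used in order 0..N-1 by each party),
   shared randomness and local processing, P2 is reproduced exactly. *)
Definition simulates (R : realFieldType) (p : nat) (P1 P2 : box R p) : Prop :=
  exists (N : nat) (L : finType) (w : L -> R)
         (xs : 'I_N -> 'Z_p -> L -> {ffun 'I_N -> 'Z_p} -> 'Z_p)
         (ys : 'I_N -> 'Z_p -> L -> {ffun 'I_N -> 'Z_p} -> 'Z_p)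
         (fa : 'Z_p -> L -> {ffun 'I_N -> 'Z_p} -> 'Z_p)
         (fb : 'Z_p -> L -> {ffun 'I_N -> 'Z_p} -> 'Z_p),
    (0 < N)%N /\ is_distr w /\ causal xs /\ causal ys /\
    forall a b x y,
      P2 a b x y =
      \sum_(l : L) w l *
        \sum_(oa : {ffun 'I_N -> 'Z_p}) \sum_(ob : {ffun 'I_N -> 'Z_p})
          ((fa x l oa == a) && (fb y l ob == b))%:R *
          \prod_(k : 'I_N) P1 (oa k) (ob k) (xs k x l oa) (ys k y l ob).

Definition equivalent (R : realFieldType) (p : nat) (P1 P2 : box R p) : Prop :=
  simulates P1 P2 /\ simulates P2 P1.

From HB Require Import structures.
From mathcomp Require Import all_boot all_order all_algebra ring.
Set Implicit Arguments. Unset Strict Implicit. Unset Printing Implicit Defensive.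
Import Order.TTheory GRing.Theory Num.Theory.
Local Open Scope ring_scope.

(* (i) If f x y = g x + h y, a uniformly random shared l in Z_p and the local
   outputs a = g x + l, b = l - h y reproduce P^f exactly.

   (ii) Both simulations are instances of one "linear wiring" protocol: if
   G x y = sum_k alpha_k F (u_k x) (v_k y) + cA x - cB y, then N copies of
   P^F (copy k fed with u_k x and v_k y), uniform shared l and the outputs
   a = l + sum_k alpha_k a_k + cA x, b = l + sum_k alpha_k b_k + cB y
   reproduce P^G (lemma [wiring_simulates]).
   - PR_p -> P^f: one copy per k in Z_p, fed with f x k and [y == k]; the
     products of the inputs sum to f x y.
   - P^f -> PR_p when f is inseparable: some mixed difference
     c = f x1 y1 - f x1 0 - f 0 y1 + f 0 0 is nonzero, hence invertible.
     Feeding copy (i, j) with [x == i] x1 and [y == j] y1 and weighting it by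
     i j / c, the cross terms sum to x y while the rest splits into a term
     depending on x only and a term depending on y only. *)

(* Simulation is invariant under pointwise equality of the boxes; this lets us
   identify PR_p with the functional box of multiplication. *)
Lemma simulates_ext (R : realFieldType) (p : nat) (P1 P1' P2 P2' : box R p) :
  (forall a b x y, P1 a b x y = P1' a b x y) ->
  (forall a b x y, P2 a b x y = P2' a b x y) ->
  simulates P1 P2 -> simulates P1' P2'.
Proof.
move=> E1 E2 [N [L [w [xs [ys [fa [fb [hN [hw [hxs [hys sim]]]]]]]]]]].
exists N, L, w, xs, ys, fa, fb; do 4 split=> //.
move=> a b x y; rewrite -E2 sim; apply: eq_bigr => l _; congr (_ * _).
apply: eq_bigr => oa _; apply: eq_bigr => ob _; congr (_ * _).
by apply: eq_bigr => k _; rewrite E1.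
Qed.

Lemma PR_Pfun_mul (R : realFieldType) (p : nat) (a b x y : 'Z_p) :
  @PR R p a b x y = Pfun R (fun x y => x * y) a b x y.
Proof. by rewrite /PR /PRj /Pfun subr0. Qed.

Lemma addr_eq_subr (V : zmodType) (l s a : V) : (l + s == a) = (l == a - s).
Proof. by apply/eqP/eqP => [<-|->]; rewrite ?addrK ?subrK. Qed.

Section UniformShift.
Variables (R : realFieldType) (p : nat).
Hypothesis hp : prime p.
Let q : R := (p%:R)^-1.

Lemma card_Zp_prime : #|'Z_p| = p.
Proof. by rewrite card_ord Zp_cast // prime_gt1. Qed.

Lemma natr_prime_neq0 : (p%:R : R) != 0.
Proof. by rewrite pnatr_eq0 -lt0n prime_gt0. Qed.

Lemma uniform_distr : is_distr (fun _ : 'Z_p => q).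
Proof.
split=> [l|]; first by rewrite invr_ge0 ler0n.
by rewrite sumr_const card_Zp_prime -mulr_natr mulVf ?natr_prime_neq0.
Qed.

Lemma sum_uniform_pinned (c : 'Z_p) (E : bool) :
  \sum_(l : 'Z_p) q * ((l == c) && E)%:R = q * E%:R.
Proof.
rewrite (bigD1 c) //= eqxx big1 ?addr0 // => l /negbTE ->.
by rewrite mulr0.
Qed.

End UniformShift.

Lemma separable_local (R : realFieldType) (p : nat) (hp : prime p)
    (f : 'Z_p -> 'Z_p -> 'Z_p) : additively_separable f -> local (@Pfun R p f).
Proof.
case=> g [h sep_f].
exists 'Z_p, (fun _ => (p%:R : R)^-1), (fun x l => g x + l), (fun y l => l - h y).
split; first exact: uniform_distr.
move=> a b x y.
have out_eq l : (g x + l == a) && (l - h y == b) = (l == a - g x) && (a - b == f x y).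
  rewrite [g x + l]addrC addr_eq_subr; case: eqP => //= ->; rewrite sep_f.
  by apply/eqP/eqP => e; [rewrite -e | rewrite -[b](subKr a) e]; ring.
under eq_bigr => l _ do rewrite out_eq.
by rewrite sum_uniform_pinned // /Pfun; case: eqP; rewrite ?mulr1 ?mulr0.
Qed.

Lemma prod_functional (R : realFieldType) (p N : nat) (q : R) (F : 'I_N -> 'Z_p)
    (oa ob : {ffun 'I_N -> 'Z_p}) :
  \prod_(k : 'I_N) (if oa k - ob k == F k then q else 0) =
  (ob == [ffun k => oa k - F k])%:R * q ^+ N.
Proof.
case: eqP => [->|ob_neq].
  rewrite mul1r -[in RHS](card_ord N) -prodr_const; apply: eq_bigr => k _.
  by rewrite ffunE opprB addrC subrK eqxx.
rewrite mul0r; have [k ob_k|ob_eq] := pickP (fun k => ob k != [ffun k => oa k - F k] k).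
  rewrite (bigD1 k) //= ifF ?mul0r //; apply/negbTE; apply: contra ob_k.
  by move/eqP=> e; rewrite ffunE -e opprB addrC subrK.
by case: ob_neq; apply/ffunP => k; move: (ob_eq k) => /= /negbFE /eqP.
Qed.

Section LinearWiring.
Variables (R : realFieldType) (p N : nat).
Hypothesis hp : prime p.
Variables (F G : 'Z_p -> 'Z_p -> 'Z_p) (u v : 'I_N -> 'Z_p -> 'Z_p).
Variables (alpha : 'I_N -> 'Z_p) (cA cB : 'Z_p -> 'Z_p).
Hypothesis wiring :
  forall x y, \sum_k alpha k * F (u k x) (v k y) + cA x - cB y = G x y.
Let q : R := (p%:R)^-1.

Definition wired_output (c l : 'Z_p) (o : {ffun 'I_N -> 'Z_p}) : 'Z_p :=
  l + \sum_k alpha k * o k + c.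

(* Summing over Bob's box outputs, only the one forced by Alice's survives,
   and the two final outputs then differ by exactly G x y. *)
Lemma wiring_sum_bob (x y a b l : 'Z_p) (oa : {ffun 'I_N -> 'Z_p}) :
  \sum_(ob : {ffun 'I_N -> 'Z_p})
     ((wired_output (cA x) l oa == a) && (wired_output (cB y) l ob == b))%:R *
     \prod_(k : 'I_N) Pfun R F (oa k) (ob k) (u k x) (v k y) =
  ((l == a - \sum_k alpha k * oa k - cA x) && (a - b == G x y))%:R * q ^+ N.
Proof.
rewrite /Pfun; under eq_bigr => ob _ do rewrite prod_functional.
rewrite (bigD1 [ffun k => oa k - F (u k x) (v k y)]) //= eqxx mul1r.
rewrite big1 ?addr0 => [|ob /negbTE ->]; last by rewrite mul0r mulr0.
congr ((nat_of_bool _)%:R * _); rewrite /wired_output.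
have -> : \sum_k alpha k * [ffun k => oa k - F (u k x) (v k y)] k =
          \sum_k alpha k * oa k - \sum_k alpha k * F (u k x) (v k y).
  by rewrite -sumrB; apply: eq_bigr => k _; rewrite ffunE mulrBr.
rewrite -wiring; move: (\sum_k _ * oa k) (\sum_k _ * F _ _) => s t.
have -> : (l + s + cA x == a) = (l == a - s - cA x).
  by rewrite -addrA addr_eq_subr opprD addrA.
case: eqP => //= ->.
by apply/eqP/eqP => e; [rewrite -e | rewrite -[b](subKr a) e]; ring.
Qed.

Lemma wiring_simulates : (0 < N)%N -> simulates (Pfun R F) (Pfun R G).
Proof.
move=> N_gt0.
exists N, 'Z_p, (fun _ => q), (fun k x _ _ => u k x), (fun k y _ _ => v k y),
  (fun x l oa => wired_output (cA x) l oa), (fun y l ob => wired_output (cB y) l ob).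
split=> //; split; first exact: uniform_distr.
split; first by []. split; first by [].
move=> a b x y.
under eq_bigr => l _ do rewrite (eq_bigr _ (fun oa _ => wiring_sum_bob x y a b l oa)).
under eq_bigr => l _ do rewrite mulr_sumr.
rewrite exchange_big /=.
under eq_bigr => oa _ do rewrite (eq_bigr _ (fun l _ => mulrA _ _ _)) -mulr_suml
  sum_uniform_pinned //.
rewrite sumr_const card_ffun !card_ord Zp_cast ?prime_gt1 // /Pfun.
have qN_pN : q ^+ N *+ p ^ N = 1.
  by rewrite -mulr_natr natrX -exprMn mulVf ?natr_prime_neq0 ?expr1n.
by rewrite -/q -mulrnAr qN_pN mulr1; case: (a - b == G x y); rewrite ?mulr1 ?mulr0.
Qed.

End LinearWiring.

(* PR_p -> P^f: copy k in Z_p receives f x k on Alice's side and [y == k] on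
   Bob's, so the sum over all copies of x_k y_k is f x y. *)
Lemma PR_simulates_functional (R : realFieldType) (p : nat) (hp : prime p)
    (f : 'Z_p -> 'Z_p -> 'Z_p) : simulates (@PR R p) (@Pfun R p f).
Proof.
apply: (@simulates_ext _ _ (Pfun R (fun x y => x * y))) => // [a b x y|].
  by rewrite PR_Pfun_mul.
apply: (wiring_simulates R (N := (Zp_trunc p).+2) hp (u := fun k x => f x k)
  (v := fun k y => (y == k)%:R) (alpha := fun _ => 1) (cA := fun _ => 0)
  (cB := fun _ => 0)) => // x y.
rewrite subr0 addr0 (bigD1 y) //= eqxx mul1r mulr1 big1 ?addr0 // => k /negbTE yk.
by rewrite eq_sym yk mul1r mulr0.
Qed.

Definition mixed_diff (V : zmodType) (f : V -> V -> V) (x1 y1 : V) : V :=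
  f x1 y1 - f x1 0 - f 0 y1 + f 0 0.

Lemma separable_of_mixed_diff (p : nat) (f : 'Z_p -> 'Z_p -> 'Z_p) :
  (forall x y, mixed_diff f x y = 0) -> additively_separable f.
Proof.
move=> mixed0; exists (fun x => f x 0), (fun y => f 0 y - f 0 0) => x y.
apply/eqP; rewrite -subr_eq0; apply/eqP.
by rewrite -[RHS](mixed0 x y) /mixed_diff; ring.
Qed.

Lemma inseparable_mixed_diff (p : nat) (f : 'Z_p -> 'Z_p -> 'Z_p) :
  ~ additively_separable f -> exists x1 y1, mixed_diff f x1 y1 != 0.
Proof.
move=> insep.
case: (pickP (fun xy : 'Z_p * 'Z_p => mixed_diff f xy.1 xy.2 != 0)) => [[x1 y1] c|zero].
  by exists x1, y1.
case: insep; apply: separable_of_mixed_diff => x y.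
by apply/eqP; move: (zero (x, y)) => /negbFE.
Qed.

Lemma mixed_diff_split (V : comPzRingType) (f : V -> V -> V) (x1 y1 : V) (s t : bool) :
  f (if s then x1 else 0) (if t then y1 else 0) =
  f (if s then x1 else 0) 0 + (f 0 (if t then y1 else 0) - f 0 0) +
  (s && t)%:R * mixed_diff f x1 y1.
Proof. by case: s; case: t; rewrite /mixed_diff /=; ring. Qed.

Lemma Zp_prime_unit (p : nat) (hp : prime p) (c : 'Z_p) : c != 0 -> c \is a GRing.unit.
Proof.
move=> c_neq0; rewrite -(natr_Zp c) unitZpE ?prime_gt1 // prime_coprime // gtnNdvd //.
  by rewrite lt0n; apply: contra c_neq0 => /eqP c0; apply/eqP; apply: val_inj.
by rewrite -{2}(Zp_cast (prime_gt1 hp)).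
Qed.

Lemma sum_indicator_product (p : nat) (x y : 'Z_p) :
  \sum_(t : 'Z_p * 'Z_p) t.1 * t.2 * ((x == t.1) && (y == t.2))%:R = x * y.
Proof.
rewrite (bigD1 (x, y)) //= !eqxx mulr1 big1 ?addr0 // => -[i j] /= ij_neq.
suff -> : (x == i) && (y == j) = false by rewrite mulr0.
by apply/negbTE; apply: contra ij_neq => /andP [/eqP <- /eqP <-].
Qed.

(* P^f -> PR_p for inseparable f: copy (i, j) is fed [x == i] x1 and
   [y == j] y1 and weighted by i j / c, c the nonzero mixed difference. *)
Lemma inseparable_simulates_PR (R : realFieldType) (p : nat) (hp : prime p)
    (f : 'Z_p -> 'Z_p -> 'Z_p) :
  ~ additively_separable f -> simulates (@Pfun R p f) (@PR R p).
Proof.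
move=> insep; have [x1 [y1 c_neq0]] := inseparable_mixed_diff insep.
set c := mixed_diff f x1 y1 in c_neq0.
have cVc : c^-1 * c = 1 by rewrite mulVr ?Zp_prime_unit.
pose e : 'I_#|{: 'Z_p * 'Z_p}| -> 'Z_p * 'Z_p := enum_val.
pose u k x := if x == (e k).1 then x1 else 0.
pose v k y := if y == (e k).2 then y1 else 0.
pose alpha k := (e k).1 * (e k).2 * c^-1.
apply: (@simulates_ext _ _ _ _ (Pfun R (fun x y => x * y))) => // [a b x y|].
  by rewrite PR_Pfun_mul.
apply: (wiring_simulates R hp (u := u) (v := v) (alpha := alpha)
  (cA := fun x => - \sum_k alpha k * f (u k x) 0)
  (cB := fun y => \sum_k alpha k * (f 0 (v k y) - f 0 0))) => // [x y|]; last first.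
  by apply/card_gt0P; exists (0, 0).
have corner k : alpha k * f (u k x) (v k y) =
    alpha k * f (u k x) 0 + alpha k * (f 0 (v k y) - f 0 0) +
    (e k).1 * (e k).2 * ((x == (e k).1) && (y == (e k).2))%:R.
  rewrite mixed_diff_split mulrDr mulrDr; congr (_ + _).
  by rewrite /alpha mulrACA -/c cVc mulr1.
rewrite (eq_bigr _ (fun k _ => corner k)) !big_split /=.
rewrite -(big_enum_val (fun t => t.1 * t.2 * ((x == t.1) && (y == t.2))%:R)).
rewrite sum_indicator_product.
by move: (\sum_k alpha k * f (u k x) 0) (\sum_k alpha k * _) => S1 S2; ring.
Qed.

Theorem lemma1 (R : realFieldType) (p : nat) (hp : prime p)
    (f : 'Z_p -> 'Z_p -> 'Z_p) :
  (additively_separable f -> local (@Pfun R p f)) /\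
  (~ additively_separable f -> simulates (@Pfun R p f) (@PR R p) /\ simulates (@PR R p) (@Pfun R p f)).
Proof.
split; first exact: separable_local.
move=> insep; split; first exact: inseparable_simulates_PR.
exact: PR_simulates_functional.
Qed.
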